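(* There exists a family of CNFs $(\Delta_n)_{n \ge 3}$, where $\Delta_n$ has $n^3$ clauses, such that: (i) the primal treewidth of $\Delta_n$ is at least $n$ (in particular unbounded), and (ii) applying the BVA transformation 2 times to $\Delta_n$ can generate a CNF whose primal treewidth is at most 2.
   Context: BVA transformation: given a CNF $\Delta$ and a fresh variable $Y$ not occurring in $\Delta$, choose a set $C_Y = \{Y \vee \alpha_1,\ldots, Y\vee \alpha_m\}$ of clauses containing literal $Y$ and a set $C_{\neg Y} = \{\neg Y \vee \beta_1,\ldots,\neg Y\vee\beta_k\}$ of clauses containing $\neg Y$ (with $\alpha_i,\beta_j$ clauses over variables of $\Delta$) such that the set of resolvents $C_Y \bowtie C_{\neg Y} = \{\alpha_i \vee \beta_j\}$ is contained in the clauses of $\Delta$ and $|C_Y \bowtie C_{\neg Y}| > |C_Y| + |C_{\neg Y}|$; the result is $\Delta$ with the clauses $C_Y \bowtie C_{\neg Y}$ removed and the clauses $C_Y \cup C_{\neg Y}$ added. Primal treewidth: a jointree for a CNF $\Delta$ is a tree whose vertices are labeled with subsets (clusters) of the variables of $\Delta$ such that (i) for each clause some cluster contains all its variables, and (ii) if a variable appears in two clusters then it appears in every cluster on the path between them. The width of a jointree is its largest cluster size minus 1; the primal treewidth of $\Delta$ is the minimum width over its jointrees. *)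

From HB Require Import structures.
From mathcomp Require Import all_boot finmap.
Set Implicit Arguments. Unset Strict Implicit. Unset Printing Implicit Defensive.
Local Open Scope fset_scope.

(** Variables are natural numbers; a literal is a pair (x, b):
    (x, true) is the positive literal x, (x, false) is the negative literal ~x. *)
Definition lit := (nat * bool)%type.
Definition clause := {fset lit}.
Definition cnf := {fset clause}.

Definition clause_vars (c : clause) : {fset nat} := [fset l.1 | l in c].
Definition cnf_vars (D : cnf) : {fset nat} := \bigcup_(c <- D) clause_vars c.

Definition resolvents (A B : {fset clause}) : {fset clause} :=
  [fset a `|` b | a in A, b in B].

(** One BVA transformation step from D to D'. A = {alpha_i}, B = {beta_j},
    C_Y = {Y \/ alpha_i}, C_~Y = {~Y \/ beta_j}. *)
Definition bva_step (D D' : cnf) : Prop :=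
  exists (Y : nat) (A B : {fset clause}),
    [/\ Y \notin cnf_vars D,
        (forall a, a \in A -> clause_vars a `<=` cnf_vars D) /\
        (forall b, b \in B -> clause_vars b `<=` cnf_vars D),
        resolvents A B `<=` D,
        (#|` [fset (Y, true) |` a | a in A]| + #|` [fset (Y, false) |` b | b in B]|
           < #|` resolvents A B|)%N
      & D' = (D `\` resolvents A B) `|` [fset (Y, true) |` a | a in A]
                                      `|` [fset (Y, false) |` b | b in B]].

(** Trees: a nonempty finite vertex type with a symmetric irreflexive edge
    relation, connected, in which between any two vertices there is exactly
    one simple path (acyclicity = at most one simple path). A path from x to y
    is a sequence p with path e x p and last x p = y; its vertices are x :: p. *)
Definition simple_path (T : finType) (e : rel T) (x y : T) (p : seq T) : bool :=
  [&& path e x p, last x p == y & uniq (x :: p)].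

Definition is_tree (T : finType) (e : rel T) : Prop :=
  [/\ (0 < #|T|)%N, symmetric e, irreflexive e,
      (forall x y : T, connect e x y)
    & (forall x y p q, simple_path e x y p -> simple_path e x y q -> p = q)].

Definition is_jointree (D : cnf) (T : finType) (e : rel T) (cl : T -> {fset nat}) : Prop :=
  [/\ is_tree e,
      (forall t, cl t `<=` cnf_vars D),
      (forall c, c \in D -> exists t, clause_vars c `<=` cl t)
    & (forall v x y p, v \in cl x -> v \in cl y -> simple_path e x y p ->
         forall z, z \in x :: p -> v \in cl z)].

Definition jt_width (T : finType) (cl : T -> {fset nat}) : nat :=
  ((\max_(t : T) #|` cl t|) - 1)%N.

(** Primal treewidth = minimum width over jointrees; we express the two
    bounds we need directly in terms of that minimum. *)
Definition primal_tw_ge (D : cnf) (n : nat) : Prop :=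
  forall (T : finType) (e : rel T) (cl : T -> {fset nat}),
    is_jointree D e cl -> (n <= jt_width cl)%N.

Definition primal_tw_le (D : cnf) (n : nat) : Prop :=
  exists (T : finType) (e : rel T) (cl : T -> {fset nat}),
    is_jointree D e cl /\ (jt_width cl <= n)%N.

(* Delta_n is the complete bipartite 2-CNF { x \/ y : x in V, y in W } over
   disjoint sets of variables with #|V| = n and #|W| = n^2.  Root a jointree
   anywhere and take, for each variable, its highest bag; the deepest of these
   highest bags contains its owner together with all the owner's neighbours
   (the subtrees of two adjacent variables intersect, so the deeper of their
   two tops lies in both subtrees), so some bag has at least n + 1 variables.
   Splitting W = W1 + W2 with #|W1| = n, two BVA steps replace the biclique
   by the clauses Y1 \/ x, ~Y1 \/ y (y in W1), Y2 \/ x, ~Y2 \/ y (y in W2).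
   Every clause then has a single variable besides {Y1, Y2}, so a star with
   centre {Y1, Y2} and a leaf {Y1, Y2, v} for each variable v is a jointree
   of width 2. *)

From HB Require Import structures.
From mathcomp Require Import all_boot finmap zify.
Set Implicit Arguments. Unset Strict Implicit. Unset Printing Implicit Defensive.
Local Open Scope fset_scope.

Section SimplePaths.
Variables (T : finType) (e : rel T).

Lemma simple_path_drop x y p1 u p2 :
  simple_path e x y (p1 ++ u :: p2) -> simple_path e u y p2.
Proof.
case/and3P; rewrite cat_path last_cat -cat_cons cat_uniq /=.
by case/andP=> _ /andP [_ p2P] ylast /and3P [_ _ p2U]; rewrite /simple_path p2P ylast.
Qed.

Lemma simple_path_take x y p1 u p2 :
  simple_path e x y (p1 ++ u :: p2) -> simple_path e x u (rcons p1 u).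
Proof.
case/and3P; rewrite cat_path -cat_cons cat_uniq /= => /andP [p1P /andP [p1u _]] _.
case/and3P=> p1U p1p2 _; rewrite /simple_path rcons_path p1P p1u last_rcons eqxx.
rewrite -rcons_cons rcons_uniq /= p1U andbT.
by apply: contra p1p2 => /= ->.
Qed.

Lemma simple_path_loop x p : simple_path e x x p -> p = [::].
Proof.
case: p => // a p /and3P [_ /eqP xlast]; rewrite -[X in uniq (X :: _)]xlast.
by rewrite cons_uniq [last _ _]/= mem_last.
Qed.

End SimplePaths.

Section RootedTree.
Variables (T : finType) (e : rel T).
Hypothesis e_tree : is_tree e.
Variable r : T.

Lemma simple_path_exists x y : exists p, simple_path e x y p.
Proof.
case: e_tree => _ _ _ conn _; have /connectP [p pP ->] := conn x y.
by case/shortenP: pP => q qP qU _; exists q; rewrite /simple_path qP qU eqxx.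
Qed.

Definition root_path x := xchoose (simple_path_exists x r).
Definition depth x := size (root_path x).

Lemma root_pathP x : simple_path e x r (root_path x).
Proof. exact: xchooseP. Qed.

Lemma root_path_unique x p : simple_path e x r p -> root_path x = p.
Proof. by case: e_tree => _ _ _ _; apply; apply: root_pathP. Qed.

Lemma root_path_drop x p1 u p2 :
  simple_path e x r (p1 ++ u :: p2) -> root_path u = p2.
Proof. by move/simple_path_drop; apply: root_path_unique. Qed.

Lemma depth_root_path u x : u \in root_path x -> depth u < depth x.
Proof.
rewrite /depth => ux; case/splitPr: ux (root_pathP x) => p1 p2 /root_path_drop ->.
by rewrite size_cat /= addnS ltnS leq_addl.
Qed.

Definition subtree (S : pred T) :=
  forall x y p, S x -> S y -> simple_path e x y p -> forall z, z \in x :: p -> S z.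

Definition highest (S : pred T) t :=
  S t && [forall u, S u ==> (depth t <= depth u)].

Lemma highest_exists (S : pred T) t : S t -> exists u, highest S u.
Proof.
move=> St; case: (arg_minnP depth St) => u Su uMin; exists u.
by rewrite /highest Su; apply/forallP => v; apply/implyP; apply: uMin.
Qed.

Lemma highest_on_root_path S t x :
  subtree S -> highest S t -> S x -> t \in x :: root_path x.
Proof.
move=> Ssub /andP [St /forallP tMin] Sx.
have [q qP] := simple_path_exists x t.
have /and3P [qpath /eqP qlast qU] := qP.
have /and3P [tpath /eqP tlast tU] := root_pathP t.
have [xqtU | ] := boolP (uniq (x :: q ++ root_path t)).
  have -> : root_path x = q ++ root_path t.
    by apply: root_path_unique; rewrite /simple_path xqtU cat_path qpath qlast
      tpath last_cat qlast tlast eqxx.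
  by rewrite -cat_cons mem_cat -qlast mem_last.
(* Otherwise the path from [x] to [t] re-enters [S] strictly above [t]. *)
rewrite -cat_cons cat_uniq qU /=; move: tU => /= /andP [_ ->]; rewrite andbT.
case/negPn/hasP=> u ut ux; have Su : S u by exact: Ssub Sx St qP u ux.
by have := implyP (tMin u) Su; rewrite leqNgt (depth_root_path ut).
Qed.

Lemma on_root_path_between x t u :
  t \in x :: root_path x -> u \in x :: root_path x -> depth u <= depth t ->
  exists2 q, simple_path e x u q & t \in x :: q.
Proof.
move=> tx /predU1P [-> | ux] tu.
  case/predU1P: tx => [-> | tx].
    by exists [::]; rewrite ?mem_head // /simple_path /= eqxx.
  by move: tu; rewrite leqNgt (depth_root_path tx).
case/splitPr: ux (root_pathP x) tx tu => p1 p2 xP tx tu.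
exists (rcons p1 u); first exact: simple_path_take xP.
move: tx; rewrite -cat_cons mem_cat -rcons_cons mem_rcons in_cons.
case/or3P=> [tp1 | /eqP -> | tp2]; [by rewrite in_cons tp1 orbT | exact: mem_head |].
by move: tp2 tu; rewrite -(root_path_drop xP) leqNgt => /depth_root_path ->.
Qed.

Lemma highest_mem_subtree S1 S2 t1 t2 x :
  subtree S1 -> subtree S2 -> highest S1 t1 -> highest S2 t2 ->
  depth t2 <= depth t1 -> S1 x -> S2 x -> S2 t1.
Proof.
move=> S1sub S2sub t1hi t2hi t21 S1x S2x.
have [q qP t1q] := on_root_path_between (highest_on_root_path S1sub t1hi S1x)
  (highest_on_root_path S2sub t2hi S2x) t21.
by case/andP: t2hi => S2t2 _; apply: S2sub S2x S2t2 qP t1 t1q.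
Qed.

End RootedTree.

Lemma jointree_biclique_bag (T : finType) (e : rel T) (cl : T -> {fset nat})
    (X Y : {fset nat}) x0 y0 :
  is_tree e ->
  (forall v x y p, v \in cl x -> v \in cl y -> simple_path e x y p ->
     forall z, z \in x :: p -> v \in cl z) ->
  [disjoint X & Y] -> x0 \in X -> y0 \in Y ->
  (forall x y, x \in X -> y \in Y -> exists t, (x \in cl t) && (y \in cl t)) ->
  exists t, minn #|`X| #|`Y| < #|`cl t|.
Proof.
move=> tree inter XY x0X y0Y common.
pose bag v : pred T := fun t => v \in cl t.
have bag_subtree v : subtree e (bag v) by move=> x y p; apply: inter.
have bag_exists v : v \in X `|` Y -> exists t, bag v t.
  case/fsetUP=> [vX | vY].
    by have [t /andP [vt _]] := common v y0 vX y0Y; exists t.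
  by have [t /andP [_ vt]] := common x0 v x0X vY; exists t.
have x0XY : x0 \in X `|` Y by rewrite in_fsetU x0X.
have [r _] := bag_exists x0 x0XY.
pose tops := [pred t | has (fun v => highest tree r (bag v) t) (X `|` Y)].
have [t1 top_t1] : exists t, tops t.
  have [t x0t] := bag_exists x0 x0XY; have [u x0u] := highest_exists tree r x0t.
  by exists u; apply/hasP; exists x0.
(* [t0] is the deepest of these highest bags; it must contain every neighbour
   of its owner [v0], since the neighbour's own highest bag is not deeper. *)
case: (arg_maxnP (depth tree r) top_t1) => t0 /hasP [v0 v0XY v0t0] t0max.
have bag_t0 w : w \in X `|` Y -> (exists t, bag v0 t && bag w t) -> w \in cl t0.
  move=> wXY [t /andP [v0t wt]]; have [tw twhi] := highest_exists tree r wt.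
  apply: (highest_mem_subtree (bag_subtree v0) (bag_subtree w) v0t0 twhi _ v0t wt).
  by apply: t0max; apply/hasP; exists w.
have bag_t0_size Z : v0 \notin Z -> Z `<=` X `|` Y ->
    (forall z, z \in Z -> exists t, bag v0 t && bag z t) -> #|`Z| < #|`cl t0|.
  move=> v0Z /fsubsetP ZXY v0Z_common.
  have <- : #|` v0 |` Z| = #|`Z|.+1 by rewrite cardfsU1 v0Z.
  apply: fsubset_leq_card; apply/fsubsetP => w /fset1UP [-> | wZ].
    by case/andP: v0t0.
  exact: bag_t0 (ZXY w wZ) (v0Z_common w wZ).
exists t0; case/fsetUP: v0XY => [v0X | v0Y].
  apply: leq_ltn_trans (geq_minr _ _) (bag_t0_size _ _ (fsubsetUr _ _) _).
    by apply: (fdisjointP XY).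
  by move=> y yY; apply: common.
apply: leq_ltn_trans (geq_minl _ _) (bag_t0_size _ _ (fsubsetUl _ _) _).
  by apply: (fdisjointP_sym XY).
by move=> x xX; have [t] := common x v0 xX v0Y; exists t; rewrite andbC.
Qed.

Section Star.
Variable S : finType.

Definition star_edge : rel (option S) := fun u v => (u == None) != (v == None).

Lemma star_simple_path x y p : x != y -> simple_path star_edge x y p ->
  p = if (x == None) || (y == None) then [:: y] else [:: None; y].
Proof.
move=> xy /and3P [pP /eqP ylast pU]; move: xy; rewrite -ylast.
case: p pP pU {ylast} => [|a [|b [|c p]]] /=; first by rewrite eqxx.
- by case: x => [x|]; case: a.
- by case: x => [x|]; case: a => [a|]; case: b => [b|]; rewrite /star_edge /= ?inE.
- by case: x => [x|]; case: a => [a|]; case: b => [b|]; case: c => [c|];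
    rewrite /star_edge /= ?inE ?eqxx ?orbT ?andbF.
Qed.

Lemma star_tree : is_tree star_edge.
Proof.
split.
- by rewrite card_option.
- by move=> u v; rewrite /star_edge eq_sym.
- by move=> u; rewrite /star_edge eqxx.
- move=> x y; apply: (@connect_trans _ _ None).
    by case: x => [x|]; [apply: connect1 | apply: connect0].
  by case: y => [y|]; [apply: connect1 | apply: connect0].
- move=> x y p q; have [<- | xy] := eqVneq x y.
    by move=> /simple_path_loop -> /simple_path_loop ->.
  by move=> /(star_simple_path xy) -> /(star_simple_path xy) ->.
Qed.

End Star.

Lemma clause_vars_sub (D : cnf) c : c \in D -> clause_vars c `<=` cnf_vars D.
Proof. by move=> cD; apply: bigfcup_sup. Qed.

Lemma primal_tw_ge_biclique (D : cnf) (X Y : {fset nat}) :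
  [disjoint X & Y] ->
  (forall x y, x \in X -> y \in Y ->
     exists2 c, c \in D & [fset x; y] `<=` clause_vars c) ->
  primal_tw_ge D (minn #|`X| #|`Y|).
Proof.
move=> XY adj T e cl [tree _ cover inter].
case: (fset_0Vmem X) => [-> | [x0 x0X]]; first by rewrite cardfs0 min0n.
case: (fset_0Vmem Y) => [-> | [y0 y0Y]]; first by rewrite cardfs0 minn0.
have common x y : x \in X -> y \in Y -> exists t, (x \in cl t) && (y \in cl t).
  move=> xX yY; have [c cD /fsubsetP xyc] := adj x y xX yY.
  have [t /fsubsetP ct] := cover c cD; exists t.
  by rewrite !ct ?xyc // !inE eqxx ?orbT.
have [t big_t] := jointree_biclique_bag tree inter XY x0X y0Y common.
have := @leq_bigmax _ (fun t => #|` cl t|) t; rewrite /jt_width; lia.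
Qed.

Lemma primal_tw_le_hub (D : cnf) (K : {fset nat}) :
  (forall c, c \in D -> exists v, clause_vars c `<=` v |` K) ->
  primal_tw_le D #|`K|.
Proof.
move=> hub; pose H := K `&` cnf_vars D.
pose cl (t : option (cnf_vars D)) := if t is Some v then val v |` H else H.
have H_cl t : H `<=` cl t by case: t => [v|] //=; apply: fsubsetU1.
exists (option (cnf_vars D) : finType), (@star_edge _), cl; split; last first.
  rewrite /jt_width leq_subLR; apply/bigmax_leqP => t _.
  have HK : #|`H| <= #|`K| by apply/fsubset_leq_card/fsubsetIl.
  case: t => [v|] /=; last exact: leq_trans HK (leq_addl _ _).
  by rewrite cardfsU1 leq_add ?leq_b1.
split.
- exact: star_tree.
- case=> [v|]; last exact: fsubsetIr.
  by rewrite fsubUset fsub1set fsvalP fsubsetIr.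
- move=> c cD; have [v /fsubsetP cv] := hub c cD.
  have /fsubsetP cD_vars := clause_vars_sub cD.
  have [vD | vD] := boolP (v \in cnf_vars D).
    exists (Some [` vD]); apply/fsubsetP => w wc /=.
    by move: (cv w wc); rewrite !inE (cD_vars w wc) andbT.
  exists None; apply/fsubsetP => w wc /=.
  move: (cv w wc); rewrite !inE (cD_vars w wc) andbT.
  by case/predU1P => // wv; move: vD; rewrite -wv cD_vars.
- move=> w x y p wx wy xyP z zp.
  have [wH | wH] := boolP (w \in H); first exact: (fsubsetP (H_cl z)).
  have owner t : w \in cl t -> exists2 v, t = Some v & w = val v.
    case: t => [v|] /=; last by rewrite (negbTE wH).
    by case/fset1UP => [-> | wH']; [exists v | rewrite wH' in wH].
  have xy : x = y.
    have [a -> wa] := owner x wx; have [b -> wb] := owner y wy.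
    by congr Some; apply: val_inj; rewrite -wa -wb.
  by move: xyP zp; rewrite -xy => /simple_path_loop ->; rewrite inE => /eqP ->.
Qed.

Definition unit_clause (v : nat) : clause := [fset (v, true)].
Definition units (V : {fset nat}) : {fset clause} := [fset unit_clause v | v in V].
Definition biclique (V W : {fset nat}) : cnf := resolvents (units V) (units W).

Lemma clause_vars_unit v : clause_vars (unit_clause v) = [fset v].
Proof. exact: imfset_fset1. Qed.

Lemma clause_vars_fset1U (l : lit) c : clause_vars (l |` c) = l.1 |` clause_vars c.
Proof. exact: imfsetU1. Qed.

Lemma mem_units V c : reflect (exists2 v, v \in V & c = unit_clause v) (c \in units V).
Proof. exact: imfsetP. Qed.

Lemma mem_biclique V W c :
  reflect (exists v w, [/\ v \in V, w \in W & c = unit_clause v `|` unit_clause w])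
          (c \in biclique V W).
Proof.
apply: (iffP (imfset2P _ _ _ _ _)) => [[a /mem_units [v vV ->]] | [v [w [vV wW ->]]]].
  by case=> b /mem_units [w wW ->] ->; exists v, w.
by exists (unit_clause v); [apply/mem_units; exists v | exists (unit_clause w) => //;
  apply/mem_units; exists w].
Qed.

Lemma clause_vars_pair v w :
  clause_vars (unit_clause v `|` unit_clause w) = [fset v; w].
Proof. by rewrite /clause_vars imfsetU -!/(clause_vars _) !clause_vars_unit. Qed.

Lemma cnf_vars_biclique V W : cnf_vars (biclique V W) `<=` V `|` W.
Proof.
apply/bigfcupsP => c /mem_biclique [v [w [vV wW ->]]] _.
by rewrite clause_vars_pair fsetUSS ?fsub1set.
Qed.

Lemma biclique_edge V W v w : v \in V -> w \in W ->
  exists2 c, c \in biclique V W & [fset v; w] `<=` clause_vars c.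
Proof.
move=> vV wW; exists (unit_clause v `|` unit_clause w); last by rewrite clause_vars_pair.
by apply/mem_biclique; exists v, w.
Qed.

Lemma mem_pair_clause x v w :
  ((x, true) \in unit_clause v `|` unit_clause w) = (x == v) || (x == w).
Proof. by rewrite !inE !xpair_eqE !andbT. Qed.

Lemma pair_clause_inj V W v w v' w' : [disjoint V & W] ->
  v \in V -> w \in W -> v' \in V -> w' \in W ->
  unit_clause v `|` unit_clause w = unit_clause v' `|` unit_clause w' ->
  v = v' /\ w = w'.
Proof.
move=> VW vV wW v'V w'W E.
have vw' : v != w' by apply: contraTneq vV => ->; apply: (fdisjointP_sym VW).
have wv' : w != v' by apply: contraTneq wW => ->; apply: (fdisjointP VW).
have := mem_pair_clause v v' w'; have := mem_pair_clause w v' w'.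
rewrite -E !mem_pair_clause !eqxx orbT (negbTE vw') (negbTE wv') orbF /=.
by move=> /esym/eqP -> /esym/eqP ->.
Qed.

Lemma card_biclique V W : [disjoint V & W] -> #|` biclique V W| = #|`V| * #|`W|.
Proof.
move=> VW; pose s := [seq unit_clause v `|` unit_clause w | v <- V, w <- W].
have -> : biclique V W = [fset c in s].
  apply/fsetP => c; rewrite in_fset; apply/mem_biclique/allpairsP.
    by case=> v [w [vV wW ->]]; exists (v, w).
  by case=> [[v w] /= [vV wW ->]]; exists v, w.
rewrite card_fseq undup_id ?size_allpairs // allpairs_uniq ?fset_uniq //.
by move=> [v w] [v' w'] /allpairsP [[? ?] /= [vV wW [-> ->]]] /allpairsP
  [[? ?] /= [v'V w'W [-> ->]]] /= /(pair_clause_inj VW vV wW v'V w'W) [-> ->].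
Qed.

Lemma bicliqueS V W W' : W `<=` W' -> biclique V W `<=` biclique V W'.
Proof.
move=> /fsubsetP WW'; apply/fsubsetP => c /mem_biclique [v [w [vV wW ->]]].
by apply/mem_biclique; exists v, w; rewrite vV WW'.
Qed.

Lemma biclique_fsetU V W1 W2 :
  biclique V (W1 `|` W2) `<=` biclique V W1 `|` biclique V W2.
Proof.
apply/fsubsetP => c /mem_biclique [v [w [vV /fsetUP [wW | wW] ->]]]; rewrite in_fsetU.
  by apply/orP; left; apply/mem_biclique; exists v, w.
by apply/orP; right; apply/mem_biclique; exists v, w.
Qed.

Definition bva (D : cnf) (Y : nat) (A B : {fset clause}) : cnf :=
  D `\` resolvents A B `|` [fset (Y, true) |` a | a in A]
    `|` [fset (Y, false) |` b | b in B].

Lemma bva_step_biclique (D : cnf) Y V W :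
  Y \notin cnf_vars D -> biclique V W `<=` D -> [disjoint V & W] ->
  2 < #|`V| -> 2 < #|`W| -> bva_step D (bva D Y (units V) (units W)).
Proof.
move=> YD /fsubsetP VWD VW V3 W3; exists Y, (units V), (units W).
have [v0 v0V] : exists v, v \in V by apply/fset0Pn; rewrite -cardfs_gt0; lia.
have [w0 w0W] : exists w, w \in W by apply/fset0Pn; rewrite -cardfs_gt0; lia.
have edge_vars v w : v \in V -> w \in W -> [fset v; w] `<=` cnf_vars D.
  move=> vV wW; have [c /VWD cD vwc] := biclique_edge vV wW.
  exact: fsubset_trans vwc (clause_vars_sub cD).
split=> //.
- split=> c /mem_units [v vU ->]; rewrite clause_vars_unit fsub1set.
    by apply: (fsubsetP (edge_vars v w0 vU w0W)); rewrite !inE eqxx.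
  by apply: (fsubsetP (edge_vars v0 v v0V vU)); rewrite !inE eqxx orbT.
- exact/fsubsetP.
- have card_tagged b U : #|` [fset (Y, b) |` a | a in units U]| <= #|`U|.
    apply: (@leq_trans #|` units U|); exact: leq_imfset_card.
  rewrite card_biclique //.
  by apply: leq_ltn_trans (leq_add (card_tagged _ _) (card_tagged _ _)) _; nia.
Qed.

Lemma fdisjoint_biclique V W1 W2 : [disjoint V & W1 `|` W2] -> [disjoint W1 & W2] ->
  [disjoint biclique V W1 & biclique V W2].
Proof.
move=> VW W12; apply/fdisjointP => c /mem_biclique [v [w [vV wW1 ->]]].
apply/negP => /mem_biclique [v' [w' [v'V w'W2]]].
have wW : w \in W1 `|` W2 by rewrite in_fsetU wW1.
have w'W : w' \in W1 `|` W2 by rewrite in_fsetU w'W2 orbT.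
case/(pair_clause_inj VW vV wW v'V w'W) => _ ww'.
by move: w'W2; rewrite -ww' (negbTE (fdisjointP W12 w wW1)).
Qed.

Lemma mem_bva_units (D : cnf) Y V W c : c \in bva D Y (units V) (units W) ->
  c \in D `\` biclique V W \/
  exists b v, v \in V `|` W /\ c = (Y, b) |` unit_clause v.
Proof.
rewrite !in_fsetU => /orP [/orP [cD | /imfsetP [a /mem_units [v vV ->] ->]] |
  /imfsetP [b /mem_units [w wW ->] ->]]; [by left | right | right].
  by exists true, v; rewrite in_fsetU vV.
by exists false, w; rewrite in_fsetU wW orbT.
Qed.

Lemma cnf_vars_bva (D : cnf) Y V W (U : {fset nat}) :
  cnf_vars D `<=` U -> V `|` W `<=` U ->
  cnf_vars (bva D Y (units V) (units W)) `<=` Y |` U.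
Proof.
move=> DU VWU; apply/bigfcupsP => c /mem_bva_units [/fsetDP [cD _] | [b [v [vVW ->]]]] _.
  exact: fsubset_trans (fsubset_trans (clause_vars_sub cD) DU) (fsubsetU1 _ _).
rewrite clause_vars_fset1U clause_vars_unit /= fsetUS // fsub1set.
exact: (fsubsetP VWU).
Qed.

Lemma biclique_split_bva V W1 W2 Y1 Y2 :
  [disjoint V & W1 `|` W2] -> [disjoint W1 & W2] ->
  Y1 \notin V `|` (W1 `|` W2) -> Y2 \notin V `|` (W1 `|` W2) -> Y1 != Y2 ->
  2 < #|`V| -> 2 < #|`W1| -> 2 < #|`W2| ->
  exists D1 D2 : cnf, [/\ bva_step (biclique V (W1 `|` W2)) D1,
                          bva_step D1 D2 & primal_tw_le D2 2].
Proof.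
move=> VW W12 Y1fresh Y2fresh Y12 V3 W13 W23.
have /andP [VW1 VW2] : [disjoint V & W1]%fset && [disjoint V & W2]%fset.
  by rewrite -fdisjointXU.
set U := V `|` (W1 `|` W2); set D := biclique V (W1 `|` W2).
set D1 := bva D Y1 (units V) (units W1); set D2 := bva D1 Y2 (units V) (units W2).
have DU : cnf_vars D `<=` U by apply: cnf_vars_biclique.
have D1U : cnf_vars D1 `<=` Y1 |` U.
  by apply: cnf_vars_bva; rewrite // fsetUS // fsubsetUl.
have D1Y2 : Y2 \notin cnf_vars D1.
  apply: contra Y2fresh => /(fsubsetP D1U) /fset1UP [/eqP | //].
  by rewrite eq_sym (negbTE Y12).
have R2D1 : biclique V W2 `<=` D1.
  apply/fsubsetP => c cR2; rewrite !in_fsetU in_fsetD.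
  rewrite (fsubsetP (bicliqueS _ (fsubsetUr W1 W2))) //.
  by rewrite (fdisjointP_sym (fdisjoint_biclique VW W12)).
have hub Y b v : Y \in [fset Y1; Y2] ->
    clause_vars ((Y, b) |` unit_clause v) `<=` v |` [fset Y1; Y2].
  by move=> YK; rewrite clause_vars_fset1U clause_vars_unit /= fsetUC fsetUS ?fsub1set.
exists D1, D2; split.
- apply: bva_step_biclique VW1 V3 W13; last exact/bicliqueS/fsubsetUl.
  by apply: contra Y1fresh => /(fsubsetP DU).
- exact: bva_step_biclique D1Y2 R2D1 VW2 V3 W23.
- have <- : #|` [fset Y1; Y2]| = 2 by rewrite cardfs2 Y12.
  apply: primal_tw_le_hub => c.
  case/mem_bva_units => [/fsetDP [] | [b [v [_ ->]]]]; last first.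
    by exists v; apply: hub; rewrite !inE eqxx orbT.
  case/mem_bva_units => [/fsetDP [cD cR1] cR2 | [b [v [_ ->]]] _]; last first.
    by exists v; apply: hub; rewrite !inE eqxx.
  have := fsubsetP (biclique_fsetU V W1 W2) c cD.
  by rewrite in_fsetU (negbTE cR1) (negbTE cR2).
Qed.

Definition fiota (a k : nat) : {fset nat} := [fset i in iota a k].

Lemma mem_fiota a k i : (i \in fiota a k) = (a <= i < a + k).
Proof. by rewrite in_fset mem_iota. Qed.

Lemma card_fiota a k : #|` fiota a k| = k.
Proof. by rewrite card_fseq undup_id ?iota_uniq // size_iota. Qed.

Lemma fiota_disjoint a k b l : a + k <= b -> [disjoint fiota a k & fiota b l].
Proof. by move=> akb; apply/fdisjointP => i; rewrite !mem_fiota; lia. Qed.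

Lemma fiota_split a k l : fiota a (k + l) = fiota a k `|` fiota (a + k) l.
Proof. by apply/fsetP => i; rewrite in_fsetU !mem_fiota; lia. Qed.

Theorem theorem5 :
  exists Delta : nat -> cnf,
    forall n : nat, (3 <= n)%N ->
      [/\ #|` Delta n| = (n ^ 3)%N,
          primal_tw_ge (Delta n) n
        & exists D1 D2 : cnf,
            [/\ bva_step (Delta n) D1, bva_step D1 D2 & primal_tw_le D2 2]].
Proof.
exists (fun n => biclique (fiota 0 n) (fiota n (n ^ 2))) => n n3.
have disj : [disjoint fiota 0 n & fiota n (n ^ 2)] by apply: fiota_disjoint.
split.
- by rewrite card_biclique // !card_fiota expnS.
- have nn2 : n <= n ^ 2 by nia.
  have := primal_tw_ge_biclique disj (@biclique_edge _ _).
  by rewrite !card_fiota (minn_idPl nn2).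
have n2 : (n ^ 2 = n + (n ^ 2 - n))%N by nia.
move: disj; rewrite n2 fiota_split => disj.
apply: (@biclique_split_bva _ _ _ (n + n ^ 2)%N (n + n ^ 2).+1%N) => //.
- by apply: fiota_disjoint; lia.
- by rewrite !in_fsetU !mem_fiota; lia.
- by rewrite !in_fsetU !mem_fiota; lia.
- by rewrite ltn_eqF.
- by rewrite card_fiota.
- by rewrite card_fiota.
- by rewrite card_fiota; nia.
Qed.
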